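(* Let $(X,\rho)$ be a bounded metric space, $A\in CL(X)$, $(A_k)\subset CL(X)$ and let $f\colon[0,\infty)\to[0,\infty)$ be an unbounded modulus. If $(A_k)$ is $f$-Wijsman statistically convergent to $A$, then $(A_k)$ is Wijsman Cesàro summable to $A$, i.e. $\lim_{n\to\infty}\frac1n\sum_{k=1}^n d(x,A_k)=d(x,A)$ for every $x\in X$.
   Context: A modulus is a function $f\colon[0,\infty)\to[0,\infty)$ such that $f(x)=0$ iff $x=0$, $f$ is subadditive, increasing and continuous. $CL(X)$ denotes the set of all non-empty closed subsets of $(X,\rho)$, and $d(x,B)=\inf_{y\in B}\rho(x,y)$. For an unbounded modulus $f$ and $K\subseteq\mathbb N$, the $f$-density is $d^f(K)=\lim_{n\to\infty}\frac{f(|\{k\le n:k\in K\}|)}{f(n)}$ (when the limit exists). $(A_k)$ is $f$-Wijsman statistically convergent to $A$ if for every $x\in X$ and every $\varepsilon>0$ the set $\{k:|d(x,A_k)-d(x,A)|\ge\varepsilon\}$ has $f$-density $0$. *)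

From Stdlib Require Import Reals Lra.
From Coquelicot Require Import Coquelicot.
Open Scope R_scope.

Definition is_metric {X : Type} (rho : X -> X -> R) : Prop :=
  (forall x y, 0 <= rho x y) /\
  (forall x y, rho x y = 0 <-> x = y) /\
  (forall x y, rho x y = rho y x) /\
  (forall x y z, rho x z <= rho x y + rho y z).

Definition metric_bounded {X : Type} (rho : X -> X -> R) : Prop :=
  exists M : R, forall x y, rho x y <= M.

Definition metric_closed {X : Type} (rho : X -> X -> R) (B : X -> Prop) : Prop :=
  forall x, (forall e, 0 < e -> exists y, B y /\ rho x y < e) -> B x.

Definition in_CL {X : Type} (rho : X -> X -> R) (B : X -> Prop) : Prop :=
  (exists y, B y) /\ metric_closed rho B.

(* d(x, B) = inf_{y in B} rho(x, y)  (finite for nonempty B since rho >= 0). *)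
Definition dist_set {X : Type} (rho : X -> X -> R) (x : X) (B : X -> Prop) : R :=
  real (Glb_Rbar (fun r => exists y, B y /\ r = rho x y)).

(* f : [0,oo) -> [0,oo) is a modulus (values of f outside [0,oo) are irrelevant). *)
Definition is_modulus (f : R -> R) : Prop :=
  (forall x, 0 <= x -> 0 <= f x) /\
  (forall x, 0 <= x -> (f x = 0 <-> x = 0)) /\
  (forall x y, 0 <= x -> 0 <= y -> f (x + y) <= f x + f y) /\
  (forall x y, 0 <= x -> x <= y -> f x <= f y) /\
  (forall x, 0 <= x -> forall eps, 0 < eps ->
     exists delta, 0 < delta /\
       forall y, 0 <= y -> Rabs (y - x) < delta -> Rabs (f y - f x) < eps).

Definition unbounded_fun (f : R -> R) : Prop :=
  forall M, exists x, 0 <= x /\ M < f x.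

(* |{k <= n : k in K}| for K a subset of N = {1,2,...}. *)
Fixpoint count_upto (K : nat -> bool) (n : nat) : nat :=
  match n with
  | O => O
  | S m => (count_upto K m + (if K (S m) then 1 else 0))%nat
  end.

Definition f_density_zero (f : R -> R) (K : nat -> bool) : Prop :=
  is_lim_seq (fun n => f (INR (count_upto K n)) / f (INR n)) 0.

Definition f_wijsman_stat_conv {X : Type} (rho : X -> X -> R) (f : R -> R)
    (Ak : nat -> X -> Prop) (A : X -> Prop) : Prop :=
  forall x : X, forall eps, 0 < eps ->
    f_density_zero f (fun k =>
      if Rle_dec eps (Rabs (dist_set rho x (Ak k) - dist_set rho x A))
      then true else false).

Definition wijsman_cesaro {X : Type} (rho : X -> X -> R)
    (Ak : nat -> X -> Prop) (A : X -> Prop) : Prop :=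
  forall x : X,
    is_lim_seq (fun n => sum_n_m (fun k => dist_set rho x (Ak k)) 1 n / INR n)
               (dist_set rho x A).

From Stdlib Require Import Reals Lra Lia.
From Coquelicot Require Import Coquelicot.
Open Scope R_scope.

(* Subadditivity gives f(n) <= m f(c) whenever n <= m c, so f(c)/f(n) < 1/m
   forces c < n/m: a set of f-density zero has natural density zero.  In a
   bounded space the distances d(x, A_k) are bounded, and a bounded sequence
   that converges outside a set of density zero is Cesaro summable to its
   limit: the exceptional terms contribute at most M c/n to the mean. *)

Definition density_zero (K : nat -> bool) : Prop :=
  is_lim_seq (fun n => INR (count_upto K n) / INR n) 0.

Definition stat_conv (a : nat -> R) (l : R) : Prop :=
  forall eps, 0 < eps ->
    density_zero (fun k => if Rle_dec eps (Rabs (a k - l)) then true else false).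

Lemma dist_set_bounds {X : Type} (rho : X -> X -> R) (M : R) (x : X) (B : X -> Prop) :
  (forall x y, 0 <= rho x y) -> (forall x y, rho x y <= M) -> (exists y, B y) ->
  0 <= dist_set rho x B <= M.
Proof.
  intros rho_ge0 rho_leM [y By].
  unfold dist_set.
  set (S := fun r => exists y, B y /\ r = rho x y).
  destruct (Glb_Rbar_correct S) as [glb_lb glb_greatest].
  assert (le_rho : Rbar_le (Glb_Rbar S) (rho x y)) by (apply glb_lb; exists y; auto).
  assert (ge0 : Rbar_le 0 (Glb_Rbar S)).
  { apply glb_greatest. intros r [z [_ ->]]. apply rho_ge0. }
  destruct (Glb_Rbar S) as [g| |]; simpl in *; try contradiction.
  specialize (rho_leM x y). lra.
Qed.

Section Modulus.

Variable f : R -> R.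
Hypothesis f_mod : is_modulus f.

Lemma modulus_gt0 (x : R) : 0 < x -> 0 < f x.
Proof.
  destruct f_mod as [f_ge0 [f_eq0 _]]. intros x_gt0.
  destruct (f_ge0 x ltac:(lra)) as [|fx0]; [assumption|].
  symmetry in fx0. apply (f_eq0 x ltac:(lra)) in fx0. lra.
Qed.

Lemma modulus_mulr_le (m : nat) (x : R) : 0 <= x -> f (INR m * x) <= INR m * f x.
Proof.
  destruct f_mod as [_ [f_eq0 [f_subadd _]]]. intros x_ge0.
  induction m as [|m IHm].
  - rewrite Rmult_0_l, Rmult_0_l. right. apply f_eq0; lra.
  - rewrite S_INR, Rmult_plus_distr_r, Rmult_1_l, Rmult_plus_distr_r, Rmult_1_l.
    pose proof (pos_INR m).
    pose proof (f_subadd (INR m * x) x ltac:(nra) x_ge0). lra.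
Qed.

Lemma modulus_ratio_lt_inv (m : nat) (a b : R) :
  0 <= a -> 0 < b -> (0 < m)%nat -> f a / f b < / INR m -> INR m * a < b.
Proof.
  intros a_ge0 b_gt0 m_gt0 ratio_lt.
  destruct f_mod as [_ [_ [_ [f_mono _]]]].
  pose proof (lt_0_INR m m_gt0) as m_pos.
  pose proof (modulus_gt0 b b_gt0) as fb_gt0.
  apply Rnot_le_lt. intros b_le.
  assert (fb_le : f b <= INR m * f a).
  { apply (Rle_trans _ (f (INR m * a))); [apply f_mono; lra|].
    apply modulus_mulr_le, a_ge0. }
  apply (Rmult_lt_compat_r (INR m * f b)) in ratio_lt; [|nra].
  replace (f a / f b * (INR m * f b)) with (INR m * f a) in ratio_lt by (field; lra).
  replace (/ INR m * (INR m * f b)) with (f b) in ratio_lt by (field; lra).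
  lra.
Qed.

Lemma f_density_zero_density_zero (K : nat -> bool) :
  f_density_zero f K -> density_zero K.
Proof.
  intros fdens. apply is_lim_seq_spec. intros eps.
  destruct (archimed_cor1 eps (cond_pos eps)) as [m [inv_m_lt m_gt0]].
  apply is_lim_seq_spec in fdens.
  destruct (fdens (mkposreal _ (Rinv_0_lt_compat _ (lt_0_INR m m_gt0)))) as [N HN].
  exists (S N). intros n n_ge.
  specialize (HN n ltac:(lia)). simpl in HN.
  rewrite Rminus_0_r in *.
  pose proof (pos_INR (count_upto K n)) as c_ge0.
  assert (n_pos : 0 < INR n) by (apply lt_0_INR; lia).
  assert (count_lt : INR m * INR (count_upto K n) < INR n).
  { apply modulus_ratio_lt_inv; [assumption..|].
    eapply Rle_lt_trans; [apply Rle_abs | exact HN]. }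
  rewrite Rabs_pos_eq by (apply Rdiv_le_0_compat; lra).
  apply (Rle_lt_trans _ (/ INR m)); [|exact inv_m_lt].
  pose proof (lt_0_INR m m_gt0).
  apply (Rmult_le_reg_r (INR m * INR n)); [nra|].
  replace (INR (count_upto K n) / INR n * (INR m * INR n))
    with (INR m * INR (count_upto K n)) by (field; lra).
  replace (/ INR m * (INR m * INR n)) with (INR n) by (field; lra).
  lra.
Qed.

End Modulus.

Lemma partial_sum_deviation_le (a : nat -> R) (l e M : R) (K : nat -> bool) :
  0 <= e -> (forall k, K k = false -> Rabs (a k - l) <= e) ->
  (forall k, Rabs (a k - l) <= M) ->
  forall n, Rabs (sum_n_m a 1 n - INR n * l) <= INR n * e + M * INR (count_upto K n).
Proof.
  intros e_ge0 good_le all_le n. induction n as [|n IHn].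
  - rewrite sum_n_m_zero by lia. simpl.
    replace (zero - 0 * l) with 0 by (unfold zero; simpl; ring). rewrite Rabs_R0. lra.
  - rewrite sum_n_Sm by lia. simpl count_upto. rewrite plus_INR, S_INR.
    change (plus ?x ?y) with (x + y).
    replace (sum_n_m a 1 n + a (S n) - (INR n + 1) * l)
      with ((sum_n_m a 1 n - INR n * l) + (a (S n) - l)) by ring.
    eapply Rle_trans; [apply Rabs_triang|].
    destruct (K (S n)) eqn:KSn; simpl.
    + specialize (all_le (S n)). lra.
    + specialize (good_le (S n) KSn). lra.
Qed.

Lemma stat_conv_bounded_cesaro (a : nat -> R) (l M : R) :
  (forall k, Rabs (a k - l) <= M) -> stat_conv a l ->
  is_lim_seq (fun n => sum_n_m a 1 n / INR n) l.
Proof.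
  intros all_le conv. apply is_lim_seq_spec. intros eps.
  pose proof (cond_pos eps) as eps_gt0.
  assert (M_ge0 : 0 <= M) by (eapply Rle_trans; [apply Rabs_pos | apply (all_le O)]).
  set (K := fun k => if Rle_dec (eps / 2) (Rabs (a k - l)) then true else false).
  assert (good_le : forall k, K k = false -> Rabs (a k - l) <= eps / 2).
  { intros k. unfold K. destruct Rle_dec; [discriminate | lra]. }
  set (delta := eps / (2 * (M + 1))).
  assert (delta_gt0 : 0 < delta) by (apply Rdiv_lt_0_compat; lra).
  pose proof (conv (eps / 2) ltac:(lra)) as dens. fold K in dens.
  apply is_lim_seq_spec in dens.
  destruct (dens (mkposreal delta delta_gt0)) as [N HN].
  exists (S N). intros n n_ge.
  specialize (HN n ltac:(lia)). simpl in HN. rewrite Rminus_0_r in HN.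
  assert (n_pos : 0 < INR n) by (apply lt_0_INR; lia).
  set (c := INR (count_upto K n)) in HN.
  assert (c_ge0 : 0 <= c) by apply pos_INR.
  assert (c_lt : c < delta * INR n).
  { rewrite Rabs_pos_eq in HN by (apply Rdiv_le_0_compat; lra).
    apply (Rmult_lt_compat_r (INR n)) in HN; [|lra].
    replace (c / INR n * INR n) with c in HN by (field; lra). exact HN. }
  assert (M_delta_le : M * delta <= eps / 2).
  { apply (Rmult_le_reg_r (2 * (M + 1))); [lra|].
    unfold delta. replace (M * (eps / (2 * (M + 1))) * (2 * (M + 1))) with (M * eps)
      by (field; lra). nra. }
  pose proof (partial_sum_deviation_le a l (eps / 2) M K ltac:(lra) good_le all_le n)
    as dev_le. fold c in dev_le.
  replace (sum_n_m a 1 n / INR n - l) with ((sum_n_m a 1 n - INR n * l) / INR n)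
    by (field; lra).
  rewrite Rabs_div, (Rabs_pos_eq (INR n)) by lra.
  apply (Rmult_lt_reg_r (INR n)); [lra|].
  replace (Rabs (sum_n_m a 1 n - INR n * l) / INR n * INR n)
    with (Rabs (sum_n_m a 1 n - INR n * l)) by (field; lra).
  nra.
Qed.

Theorem corollary3p5 (X : Type) (rho : X -> X -> R) (f : R -> R)
    (A : X -> Prop) (Ak : nat -> X -> Prop) :
  is_metric rho -> metric_bounded rho ->
  in_CL rho A -> (forall k, in_CL rho (Ak k)) ->
  is_modulus f -> unbounded_fun f ->
  f_wijsman_stat_conv rho f Ak A ->
  wijsman_cesaro rho Ak A.
Proof.
  intros [rho_ge0 _] [M rho_leM] [A_ne _] Ak_CL f_mod _ fconv x.
  pose proof (dist_set_bounds rho M x A rho_ge0 rho_leM A_ne) as dA.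
  assert (dAk : forall k, 0 <= dist_set rho x (Ak k) <= M).
  { intros k. apply dist_set_bounds; [assumption | assumption | apply Ak_CL]. }
  apply (stat_conv_bounded_cesaro _ _ M).
  - intros k. specialize (dAk k). apply Rabs_le. lra.
  - intros eps eps_gt0. apply (f_density_zero_density_zero f f_mod), fconv, eps_gt0.
Qed.
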